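(* Let $(\mathcal{H},\langle\cdot,\cdot\rangle)$ be a real Hilbert space with induced norm $\|\cdot\|$. Let $f:\mathcal{H}\to\mathbb{R}$ be $\mu$-strongly convex and $L$-smooth with $0<\mu<L<+\infty$, and let $g:\mathcal{H}\to\mathbb{R}\cup\{+\infty\}$ be convex, proper and lower semicontinuous. Let $q=\mu/L$ and let $((x^k,y^k,z^k,A_k))_{k\in\mathbb{N}_0}$ be generated by the Prox-ITEM method (described in the context) from an arbitrary $x^0\in\mathcal{H}$. Let $x^\star$ be the unique minimizer of $f+g$ over $\mathcal{H}$. Then for every $k\in\mathbb{N}_0$, $$\|z^k-x^\star\|^2\le \frac{1}{1+qA_k}\,\|x^0-x^\star\|^2.$$
   Context: $f$ is $L$-smooth if it is Fréchet differentiable with $L$-Lipschitz gradient; $\mu$-strongly convex means $f-\frac{\mu}{2}\|\cdot\|^2$ is convex. For $\gamma>0$, $\operatorname{Prox}^{\gamma}_g(x)=\operatorname{argmin}_{z\in\mathcal{H}}\big(g(z)+\frac{1}{2\gamma}\|x-z\|^2\big)$. The Prox-ITEM method: set $q=\mu/L$, $A_0=0$, $z^0=x^0$, and for $k=0,1,2,\dots$: $A_{k+1}=\frac{(1+q)A_k+2\big(1+\sqrt{(1+A_k)(1+qA_k)}\big)}{(1-q)^2}$, $\beta_k=\frac{A_k}{(1-q)A_{k+1}}$, $\delta_k=\sqrt{\frac{A_{k+1}}{1+qA_{k+1}}}$, $y^k=(1-\beta_k)z^k+\beta_k x^k$, $\bar z^{k+1}=(1-q\delta_k)z^k+q\delta_k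 y^k-\frac{\delta_k}{L}\nabla f(y^k)$, $z^{k+1}=\operatorname{Prox}^{\delta_k/L}_g(\bar z^{k+1})$, $x^{k+1}=y^k-\frac1L\nabla f(y^k)-\frac{1}{\delta_k}(\bar z^{k+1}-z^{k+1})$. *)

From mathcomp Require Import all_boot all_order all_algebra.
From mathcomp Require Import boolp reals constructive_ereal.
Set Implicit Arguments. Unset Strict Implicit. Unset Printing Implicit Defensive.
Import Order.TTheory GRing.Theory Num.Theory.
Local Open Scope ring_scope.

Section Hilbert.
Variables (R : realType) (V : lmodType R) (ip : V -> V -> R).

Definition hnorm (x : V) : R := Num.sqrt (ip x x).

Definition is_hilbert : Prop :=
  [/\ (forall x y, ip x y = ip y x),
      (forall a x y w, ip (a *: x + y) w = a * ip x w + ip y w),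
      (forall x, 0 <= ip x x),
      (forall x, ip x x = 0 -> x = 0) &
      (forall u : nat -> V,
         (forall e : R, 0 < e -> exists N, forall m n, (N <= m)%N -> (N <= n)%N ->
              hnorm (u m - u n) < e) ->
         exists l, forall e : R, 0 < e -> exists N, forall n, (N <= n)%N ->
              hnorm (u n - l) < e)].

Definition convex_fun (h : V -> R) : Prop :=
  forall x y (t : R), 0 <= t <= 1 ->
    h (t *: x + (1 - t) *: y) <= t * h x + (1 - t) * h y.

Definition strongly_convex (mu : R) (h : V -> R) : Prop :=
  convex_fun (fun x => h x - mu / 2 * hnorm x ^+ 2).

Definition is_gradient (h : V -> R) (gf : V -> V) : Prop :=
  forall x (e : R), 0 < e -> exists d : R, 0 < d /\
    forall y, hnorm (y - x) < d ->
      `| h y - h x - ip (gf x) (y - x) | <= e * hnorm (y - x).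

Definition L_smooth (L : R) (h : V -> R) (gf : V -> V) : Prop :=
  is_gradient h gf /\ forall x y, hnorm (gf x - gf y) <= L * hnorm (x - y).

Local Open Scope ereal_scope.

(* g : V -> R U {+oo} : never -oo *)
Definition no_minfty (g : V -> \bar R) : Prop := forall x, g x != -oo.

Definition proper_fun (g : V -> \bar R) : Prop :=
  no_minfty g /\ exists x, g x != +oo.

Definition econvex_fun (g : V -> \bar R) : Prop :=
  forall x y : V, forall t : R, (0 < t < 1)%R ->
    g (t *: x + (1 - t) *: y)%R <= t%:E * g x + (1 - t)%:E * g y.

Definition lsc_fun (g : V -> \bar R) : Prop :=
  forall x (a : R), a%:E < g x -> exists d : R, (0 < d)%R /\
    forall y, (hnorm (y - x) < d)%R -> a%:E < g y.

Definition is_prox (g : V -> \bar R) (gamma : R) (x p : V) : Prop :=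
  forall w, g p + (hnorm (x - p) ^+ 2 / (2 * gamma))%R%:E
            <= g w + (hnorm (x - w) ^+ 2 / (2 * gamma))%R%:E.

Definition is_minimizer (f : V -> R) (g : V -> \bar R) (xs : V) : Prop :=
  forall w, (f xs)%:E + g xs <= (f w)%:E + g w.

End Hilbert.

Section Coefs.
Variable R : realType.
Definition A_next (q a : R) : R :=
  ((1 + q) * a + 2 * (1 + Num.sqrt ((1 + a) * (1 + q * a)))) / (1 - q) ^+ 2.
Definition beta_coef (q a a' : R) : R := a / ((1 - q) * a').
Definition delta_coef (q a' : R) : R := Num.sqrt (a' / (1 + q * a')).
End Coefs.

From mathcomp Require Import all_boot all_order all_algebra.
From mathcomp Require Import boolp reals constructive_ereal.
From mathcomp Require Import ring lra.
Import Order.TTheory GRing.Theory Num.Theory.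
Set Implicit Arguments. Unset Strict Implicit. Unset Printing Implicit Defensive.
Local Open Scope ring_scope.

(* Write h = f - (mu/2) ||.||^2: it is convex, and its gradient satisfies the
   descent inequality with constant L - mu, hence the interpolation inequality
     ||grad h u - grad h x||^2 / (2 (L - mu)) <= h u - h x - <grad h x, u - x>.
   First-order optimality of the prox step and of x* gives subgradients
   s^(k+1) = (L / delta_k) (zbar^(k+1) - z^(k+1)) of g at z^(k+1) and
   s* = - grad f x* at x*.  The potential
     P_k = (1 + q A_k) ||z^k - x*||^2
           + (A_k / L) ((1 - q) eta_k + q <z^k - x*, s^k - s*>
                        + (||s^k - s*||^2 - ||grad h y^(k-1) - grad h x*||^2) / (2 L)),
   where eta_k is the Bregman gap of h between y^(k-1) and x*, equals
   ||x^0 - x*||^2 for k = 0 and dominates (1 + q A_k) ||z^k - x*||^2.  Once A_k and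
   A_(k+1) are written through delta_k, P_k - P_(k+1) is a combination with
   nonnegative coefficients of two interpolation inequalities, the monotonicity and
   the three-point cyclic monotonicity of the subdifferential of g, and squares. *)

Lemma le_of_leD_small (R : realFieldType) (a b c : R) :
  (forall t, 0 < t < 1 -> a <= b + t * c) -> a <= b.
Proof.
move=> H; apply/ler_addgt0Pr => e he.
have hc := normr_ge0 c.
have hec : 0 < e + e + `|c| by lra.
set t := e / (e + e + `|c|).
have ht0 : 0 < t by rewrite divr_gt0.
have ht1 : t < 1 by rewrite ltr_pdivrMr // mul1r; lra.
apply: le_trans (H t _) _; first by rewrite ht0 ht1.
rewrite lerD2l; apply: le_trans (_ : t * `|c| <= e).
  by apply: ler_wpM2l; [exact: ltW | exact: ler_norm].
by rewrite /t mulrAC ler_pdivrMr //; nra.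
Qed.

Lemma le_of_leD_divX2 (R : realType) (a b c : R) :
  (forall n, a <= b + c / 2 ^+ n) -> a <= b.
Proof.
move=> H; apply/ler_addgt0Pr => e he.
have hc : 0 <= `|c| / e := divr_ge0 (normr_ge0 c) (ltW he).
have hn := archi_boundP hc; set n := Num.bound _ in hn.
apply: le_trans (H n) _; rewrite lerD2l.
have h2n : 0 < 2 ^+ n :> R by rewrite exprn_gt0.
rewrite ler_pdivrMr //; apply: le_trans (ler_norm c) _.
have : n%:R <= 2 ^+ n :> R by rewrite -natrX ler_nat ltnW // ltn_expl.
by rewrite ltr_pdivrMr // in hn; nra.
Qed.

Section Coefficients.
Variables (R : realType) (q : R).
Hypotheses (q_gt0 : 0 < q) (q_lt1 : q < 1).

Lemma A_next_mul (A : R) :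
  (1 - q) ^+ 2 * A_next q A = (1 + q) * A + 2 + 2 * Num.sqrt ((1 + A) * (1 + q * A)).
Proof. by rewrite /A_next; field; rewrite gt_eqF // subr_gt0. Qed.

Lemma A_next_gt (A : R) : 0 <= A -> A < A_next q A.
Proof.
move=> hA; have h1q : 0 < 1 - q by rewrite subr_gt0.
have hq2 : 0 < (1 - q) ^+ 2 by rewrite exprn_gt0.
have hqA : 0 <= q * A := mulr_ge0 (ltW q_gt0) hA.
have := sqrtr_ge0 ((1 + A) * (1 + q * A)).
by rewrite -subr_gt0 -(pmulr_rgt0 _ hq2) mulrBr A_next_mul => ?; nra.
Qed.

Lemma A_next_sqr (A : R) : 0 <= A ->
  ((1 + q) * A_next q A - A) ^+ 2 = 4 * A_next q A * (1 + q * A_next q A).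
Proof.
move=> hA; have hq2 : 0 < (1 - q) ^+ 2 by rewrite exprn_gt0 // subr_gt0.
set r := Num.sqrt ((1 + A) * (1 + q * A)).
have hr2 : r ^+ 2 = (1 + A) * (1 + q * A).
  by rewrite sqr_sqrtr // mulr_ge0 // addr_ge0 // mulr_ge0 // ltW.
have : (1 - q) ^+ 2 * (((1 + q) * A_next q A - A) ^+ 2
                        - 4 * A_next q A * (1 + q * A_next q A)) = 0.
  rewrite (_ : _ * _ = ((1 - q) ^+ 2 * A_next q A - (1 + q) * A - 2) ^+ 2 - 4 * r ^+ 2).
    by rewrite A_next_mul -/r; ring.
  by rewrite hr2; ring.
by move/eqP; rewrite mulf_eq0 (gt_eqF hq2) /= subr_eq0 => /eqP.
Qed.

(* Expressing [A_k] and [A_(k+1)] through [delta_k] turns the decrease of the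
   potential into a rational identity in [delta_k]. *)
Lemma A_next_param (A : R) : 0 <= A ->
  let A' := A_next q A in let d := delta_coef q A' in
  [/\ 0 < d, q * d ^+ 2 < 1, A' = d ^+ 2 / (1 - q * d ^+ 2)
    & A = d * ((1 + q) * d - 2) / (1 - q * d ^+ 2)].
Proof.
move=> hA A' d.
have hsq := A_next_sqr hA; have hAA' := A_next_gt hA; rewrite -/A' in hsq hAA'.
have hA'0 : 0 < A' := le_lt_trans hA hAA'.
have hqA' : 0 < 1 + q * A' by rewrite ltr_pwDl // mulr_ge0 ?ltW.
set D := (1 + q) * A' - A in hsq.
have hD : 0 < D by have := mulr_gt0 q_gt0 hA'0; rewrite /D; lra.
have hd2 : d ^+ 2 = A' / (1 + q * A').
  by rewrite /d /delta_coef sqr_sqrtr // divr_ge0 // ltW.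
have hdD : d = 2 * A' / D.
  rewrite /d /delta_coef (_ : A' / (1 + q * A') = (2 * A' / D) ^+ 2).
    by rewrite sqrtr_sqr ger0_norm // divr_ge0 // ltW // mulr_gt0.
  by rewrite expr_div_n hsq; field; rewrite !gt_eqF.
have hd : 0 < d by rewrite hdD divr_gt0 // mulr_gt0.
have hqd : 1 - q * d ^+ 2 = 1 / (1 + q * A') by rewrite hd2; field; rewrite gt_eqF.
have eA' : A' = d ^+ 2 / (1 - q * d ^+ 2) by rewrite hqd hd2; field; rewrite gt_eqF.
split => //; first by rewrite -subr_gt0 hqd divr_gt0.
have -> : A = (1 + q) * A' - 2 * A' / d by rewrite hdD /D; field; rewrite !gt_eqF.
by rewrite eA'; field; rewrite hqd !gt_eqF // divr_gt0.
Qed.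

Lemma A_param_bounds (d A A' : R) : 0 < d -> q * d ^+ 2 < 1 ->
  A' = d ^+ 2 / (1 - q * d ^+ 2) -> A = d * ((1 + q) * d - 2) / (1 - q * d ^+ 2) ->
  A <= A' /\ 0 <= d * (A' - A) - A.
Proof.
move=> hd hqd -> ->.
have h1 : 0 < 1 - q * d ^+ 2 by rewrite subr_gt0.
have hqd1 : q * d < 1.
  case: (lerP d 1) => hd1.
    by apply: (le_lt_trans _ q_lt1); rewrite -{2}(mulr1 q) ler_pM2l.
  by apply: lt_trans hqd; rewrite expr2 mulrA -{1}(mulr1 (q * d)) ltr_pM2l // mulr_gt0.
split.
  rewrite -subr_ge0 (_ : _ - _ = d * (2 - q * d) / (1 - q * d ^+ 2)).
    by apply: divr_ge0 (ltW h1); apply: mulr_ge0; lra.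
  by field; rewrite gt_eqF.
rewrite (_ : _ - _ = d * ((d + 1) * (1 - q * d) + 1) / (1 - q * d ^+ 2)).
  by apply: divr_ge0 (ltW h1); apply: mulr_ge0; nra.
by field; rewrite gt_eqF.
Qed.

End Coefficients.

Section Hilbert.
Variables (R : realType) (V : lmodType R) (ip : V -> V -> R).
Hypothesis Hh : is_hilbert ip.

Lemma ipC x y : ip x y = ip y x.
Proof. by case: Hh. Qed.

Lemma ipDZl a x y w : ip (a *: x + y) w = a * ip x w + ip y w.
Proof. by case: Hh. Qed.

Lemma ip0l w : ip 0 w = 0.
Proof. by have /eqP := ipDZl 1 0 0 w; rewrite scaler0 addr0 mul1r -subr_eq subrr eq_sym => /eqP. Qed.

Lemma ipDl x y w : ip (x + y) w = ip x w + ip y w.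
Proof. by have := ipDZl 1 x y w; rewrite scale1r mul1r. Qed.

Lemma ipZl a x w : ip (a *: x) w = a * ip x w.
Proof. by have := ipDZl a x 0 w; rewrite !addr0 ip0l addr0. Qed.

Lemma ipNl x w : ip (- x) w = - ip x w.
Proof. by rewrite -scaleN1r ipZl mulN1r. Qed.

Lemma ip0r w : ip w 0 = 0.
Proof. by rewrite ipC ip0l. Qed.

Lemma ipDr x y w : ip w (x + y) = ip w x + ip w y.
Proof. by rewrite ipC ipDl !(ipC w). Qed.

Lemma ipZr a x w : ip w (a *: x) = a * ip w x.
Proof. by rewrite ipC ipZl (ipC w). Qed.

Lemma ipNr x w : ip w (- x) = - ip w x.
Proof. by rewrite ipC ipNl (ipC w). Qed.

Lemma ip_ge0 x : 0 <= ip x x.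
Proof. by case: Hh. Qed.

Lemma ip_eq0 x : ip x x = 0 -> x = 0.
Proof. by case: Hh => _ _ _ /(_ x). Qed.

Lemma hnorm_ge0 x : 0 <= hnorm ip x.
Proof. exact: sqrtr_ge0. Qed.

Lemma hnorm_sqr x : hnorm ip x ^+ 2 = ip x x.
Proof. by rewrite /hnorm sqr_sqrtr // ip_ge0. Qed.

Lemma hnormZ a x : hnorm ip (a *: x) = `|a| * hnorm ip x.
Proof. by rewrite /hnorm ipZl ipZr mulrA -expr2 sqrtrM ?sqr_ge0 // sqrtr_sqr. Qed.

Lemma eq_of_ip_sub u v : (forall w, ip (u - v) w = 0) -> u = v.
Proof. by move=> /(_ (u - v))/ip_eq0/subr0_eq. Qed.

Lemma cauchy_schwarz a b : ip a b <= hnorm ip a * hnorm ip b.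
Proof.
have sqr_le : ip a b ^+ 2 <= ip a a * ip b b.
  have [/ip_eq0 ->|hb] := eqVneq (ip b b) 0; first by rewrite ip0r expr0n /= ip0r mulr0.
  have hbp : 0 < ip b b by rewrite lt_def hb ip_ge0.
  have := ip_ge0 (a - (ip a b / ip b b) *: b).
  have -> : ip (a - (ip a b / ip b b) *: b) (a - (ip a b / ip b b) *: b)
      = (ip a a * ip b b - ip a b ^+ 2) / ip b b.
    by rewrite !(ipDl, ipDr, ipNl, ipNr, ipZl, ipZr) (ipC b a); field; rewrite gt_eqF.
  by rewrite pmulr_lge0 ?invr_gt0 // subr_ge0.
have [hab|hab] := lerP (ip a b) 0; first by rewrite (le_trans hab) ?mulr_ge0 ?hnorm_ge0.
rewrite -(ger0_norm (ltW hab)) -sqrtr_sqr /hnorm -sqrtrM ?ip_ge0 //.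
by rewrite ler_sqrt // mulr_ge0 ?ip_ge0.
Qed.

(* Replacing every [ip a b] by the average of [ip a b] and [ip b a] lets [ring]
   and [field] use the symmetry of the inner product. *)
Let symip x y := (ip x y + ip y x) / 2.

Let ip_symip x y : ip x y = symip x y.
Proof. by rewrite /symip (ipC y x); field. Qed.

Ltac ip_normalize :=
  rewrite ?(ipDl, ipDr, ipNl, ipNr, ipZl, ipZr, ip0l, ip0r) ?ip_symip /symip.

(* Reduces [u = v] in [V] to the scalar identity [ip (u - v) w = 0], linear in [w]. *)
Ltac vec_eq := apply: eq_of_ip_sub => ?; rewrite ?(ipDl, ipNl, ipZl, ip0l).

Lemma is_gradient_subr_sqr (h : V -> R) (gh : V -> V) (c : R) :
  is_gradient ip h gh ->
  is_gradient ip (fun x => h x - c / 2 * hnorm ip x ^+ 2) (fun x => gh x - c *: x).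
Proof.
move=> Hg x e he.
have hc := normr_ge0 c.
have he2 : 0 < e / 2 by rewrite divr_gt0.
have [r [hr Hr]] := Hg x _ he2.
have hc1 : 0 < `|c| + 1 by lra.
have hr' : 0 < e / 2 / (`|c| + 1) by rewrite divr_gt0.
exists (Num.min r (e / 2 / (`|c| + 1))); split; first by rewrite lt_min hr.
move=> w; rewrite lt_min => /andP[/Hr hw].
set n := hnorm ip (w - x) in hw *; have hn : 0 <= n := hnorm_ge0 _.
rewrite ltr_pdivlMr // => hnc.
have -> : h w - c / 2 * hnorm ip w ^+ 2 - (h x - c / 2 * hnorm ip x ^+ 2)
          - ip (gh x - c *: x) (w - x)
        = (h w - h x - ip (gh x) (w - x)) - c / 2 * n ^+ 2.
  by rewrite /n !hnorm_sqr; ip_normalize; field.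
apply: le_trans (ler_normB _ _) _.
rewrite normrM (ger0_norm (sqr_ge0 n)) normrM normfV (ger0_norm (ler0n _ 2)).
by nra.
Qed.

Lemma convex_first_order (h : V -> R) (gh : V -> V) :
  convex_fun h -> is_gradient ip h gh -> forall x d, h x + ip (gh x) d <= h (x + d).
Proof.
move=> hcv hg x d.
set n := hnorm ip d; have hn : 0 <= n := hnorm_ge0 d.
apply: (@le_of_leD_small _ _ _ n) => e /andP[he _].
have [r [hr Hr]] := hg x e he.
have hnr : 0 < n + r + r by lra.
set t := r / (n + r + r).
have ht0 : 0 < t by rewrite divr_gt0.
have ht1 : t < 1 by rewrite ltr_pdivrMr // mul1r; lra.
have htn : t * n < r by rewrite mulrAC ltr_pdivrMr //; nra.
have hxt : x + t *: d - x = t *: d by rewrite addrC addKr.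
have := Hr (x + t *: d); rewrite hxt hnormZ (ger0_norm (ltW ht0)) -/n.
move/(_ htn); rewrite ler_norml ipZr => /andP[Hlow _].
have := hcv (x + d) x t; rewrite (ltW ht0) (ltW ht1) => /(_ isT).
have -> : t *: (x + d) + (1 - t) *: x = x + t *: d by vec_eq; ring.
move=> Hcvx; rewrite -(ler_pM2l ht0); nra.
Qed.

Section Descent.
Variables (f : V -> R) (gf : V -> V) (L : R).
Hypothesis f_first_order : forall x d, f x + ip (gf x) d <= f (x + d).
Hypothesis gf_lipschitz : forall x y, hnorm ip (gf x - gf y) <= L * hnorm ip (x - y).

Lemma ip_gradient_increment_le x d : ip (gf (x + d) - gf x) d <= L * ip d d.
Proof.
apply: le_trans (cauchy_schwarz _ _) _.
rewrite -hnorm_sqr expr2 mulrA ler_wpM2r ?hnorm_ge0 //.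
by have := gf_lipschitz (x + d) x; rewrite (addrC x) addrK.
Qed.

(* Splitting [d] into two halves maps a quadratic bound with constant [K] to one
   with constant [K / 2 + L / 4], whose fixed point is [L / 2]. *)
Lemma descent_halving n x d :
  f (x + d) - f x - ip (gf x) d <= L / 2 * (1 + 2 ^- n) * ip d d.
Proof.
elim: n x d => [|n IH] x d.
  have := f_first_order (x + d) (- d); have := ip_gradient_increment_le x d.
  rewrite addrK expr0 invr1; ip_normalize => ? ?; lra.
have := IH x (2^-1 *: d); have := IH (x + 2^-1 *: d) (2^-1 *: d).
have := ip_gradient_increment_le x (2^-1 *: d).
have -> : x + 2^-1 *: d + 2^-1 *: d = x + d by vec_eq; field.
have -> : L / 2 * (1 + 2 ^- n.+1) = L / 2 * (1 + 2 ^- n) / 2 + L / 4.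
  by rewrite exprS; field; rewrite expf_neq0 // pnatr_eq0.
set K := L / 2 * (1 + 2 ^- n); ip_normalize => ? ? ?; nra.
Qed.

Lemma descent_lemma x d : f (x + d) <= f x + ip (gf x) d + L / 2 * ip d d.
Proof.
apply: (@le_of_leD_divX2 _ _ _ (L / 2 * ip d d)) => n.
have := descent_halving n x d.
have -> : L / 2 * (1 + 2 ^- n) * ip d d = L / 2 * ip d d + L / 2 * ip d d / 2 ^+ n by ring.
lra.
Qed.

End Descent.

Definition bregman (h : V -> R) (gh : V -> V) (u x : V) : R :=
  h u - h x - ip (gh x) (u - x).

Lemma bregman_three_point (h : V -> R) (gh : V -> V) (u v w : V) :
  bregman h gh u v = bregman h gh u w - bregman h gh v w - ip (gh v - gh w) (u - v).
Proof. by rewrite /bregman; ip_normalize; ring. Qed.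

(* Compare the lower bound at [x] with the upper bound at [u] in the point
   [u - (grad h u - grad h x) / M]. *)
Lemma bregman_ge (h : V -> R) (gh : V -> V) (M : R) : 0 < M ->
  (forall x d, h x + ip (gh x) d <= h (x + d)) ->
  (forall x d, h (x + d) <= h x + ip (gh x) d + M / 2 * ip d d) ->
  forall u x, ip (gh u - gh x) (gh u - gh x) / (2 * M) <= bregman h gh u x.
Proof.
move=> hM hlow hup u x.
set D := gh u - gh x; set p := u - M^-1 *: D.
have := hlow x (p - x); rewrite (addrC x) subrK => h1.
have := hup u (- (M^-1 *: D)); rewrite -/p => h2.
rewrite -subr_ge0.
have -> : bregman h gh u x - ip D D / (2 * M)
    = (h u + ip (gh u) (- (M^-1 *: D)) + M / 2 * ip (- (M^-1 *: D)) (- (M^-1 *: D)) - h p)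
      + (h p - (h x + ip (gh x) (p - x))).
  by rewrite /bregman /p /D; ip_normalize; field; rewrite gt_eqF.
by rewrite addr_ge0 // subr_ge0.
Qed.

Definition subgradient (g : V -> \bar R) (p s : V) : Prop :=
  exists gp : R, g p = gp%:E /\
    forall w (gw : R), g w = gw%:E -> gp + ip s (w - p) <= gw.

Lemma subgradient_monotone (g : V -> \bar R) (z1 z2 s1 s2 : V) :
  subgradient g z1 s1 -> subgradient g z2 s2 -> 0 <= ip (s1 - s2) (z1 - z2).
Proof.
move=> [g1 [h1 H1]] [g2 [h2 H2]].
by have := H1 _ _ h2; have := H2 _ _ h1; ip_normalize => ? ?; lra.
Qed.

Lemma subgradient_cyclic3 (g : V -> \bar R) (z1 z2 z3 s1 s2 s3 : V) :
  subgradient g z1 s1 -> subgradient g z2 s2 -> subgradient g z3 s3 ->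
  0 <= ip s3 (z3 - z1) - ip s2 (z3 - z2) - ip s1 (z2 - z1).
Proof.
move=> [g1 [h1 H1]] [g2 [h2 H2]] [g3 [h3 H3]].
by have := H1 _ _ h2; have := H2 _ _ h3; have := H3 _ _ h1; ip_normalize => ? ? ?; lra.
Qed.

Section ProperConvex.
Variable g : V -> \bar R.
Hypotheses (g_proper : proper_fun g) (g_convex : econvex_fun g).

(* First-order optimality: the quadratic term [t ^+ 2 * c w] vanishes as [t -> 0]. *)
Lemma subgradient_of_argmin (phi : V -> R) (p s : V) (c : V -> R) :
  (forall w, (g p + (phi p)%:E <= g w + (phi w)%:E)%E) ->
  (forall w t, 0 < t < 1 ->
     phi (t *: w + (1 - t) *: p) <= phi p - t * ip s (w - p) + t ^+ 2 * c w) ->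
  subgradient g p s.
Proof.
move=> hmin hphi.
have [w0 [r0 hr0]] : exists w0 (r0 : R), g w0 = r0%:E.
  have [w0 hw0] := g_proper.2; have hw0' := g_proper.1 w0.
  by case hr0: (g w0) hw0 hw0' => [r0 | |] // _ _; exists w0, r0.
have [gp hgp] : exists gp : R, g p = gp%:E.
  move: (hmin w0) (g_proper.1 p); rewrite hr0.
  by case: (g p) => [gp | |] // _ _; exists gp.
exists gp; split => // w gw hgw.
apply: (@le_of_leD_small _ _ _ (c w)) => t ht; have /andP[ht0 ht1] := ht.
set wt := t *: w + (1 - t) *: p.
have := g_convex w p ht; rewrite hgw hgp -!EFinM -EFinD => hcv.
have [gt hgt] : exists gt : R, g wt = gt%:E.
  by move: hcv (g_proper.1 wt); case: (g wt) => [gt | |] // _ _; exists gt.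
rewrite hgt lee_fin in hcv.
have := hmin wt; rewrite hgp hgt -!EFinD lee_fin => hm.
have := hphi w t ht; rewrite -/wt => hph.
by rewrite -(ler_pM2l ht0); nra.
Qed.

Lemma prox_subgradient (gam : R) (x p : V) :
  0 < gam -> is_prox ip g gam x p -> subgradient g p (gam^-1 *: (x - p)).
Proof.
move=> hgam hprox.
apply: (@subgradient_of_argmin (fun w => hnorm ip (x - w) ^+ 2 / (2 * gam)) _ _
          (fun w => ip (w - p) (w - p) / (2 * gam))) => // w t _.
rewrite !hnorm_sqr le_eqVlt; apply/orP; left; apply/eqP.
by ip_normalize; field; rewrite gt_eqF.
Qed.

Lemma minimizer_subgradient (f : V -> R) (gf : V -> V) (C : R) (xs : V) :
  is_minimizer f g xs ->
  (forall x d, f (x + d) <= f x + ip (gf x) d + C * ip d d) ->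
  subgradient g xs (- gf xs).
Proof.
move=> hmin hup.
apply: (@subgradient_of_argmin f _ _ (fun w => C * ip (w - xs) (w - xs))).
  by move=> w; rewrite addeC [X in (_ <= X)%E]addeC.
move=> w t _; have := hup xs (t *: (w - xs)).
have -> : xs + t *: (w - xs) = t *: w + (1 - t) *: xs by vec_eq; ring.
by ip_normalize; nra.
Qed.

End ProperConvex.

Section Potential.
Variables (q L : R).
Hypotheses (q_gt0 : 0 < q) (q_lt1 : q < 1) (L_gt0 : 0 < L).

(* [Z = z^k - x*], [S = s^k - s*], [G = grad h (y^(k-1)) - grad h x*] and [eta]
   the Bregman gap of [h] between [y^(k-1)] and [x*]. *)
Definition potential (A : R) (Z S : V) (eta : R) (G : V) : R :=
  (1 + q * A) * ip Z Z
  + A / L * ((1 - q) * eta + q * ip Z S + (ip S S - ip G G) / (2 * L)).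

Lemma potential_ge (A : R) (Z S : V) (eta : R) (G : V) : 0 <= A ->
  ip G G / (2 * L) <= (1 - q) * eta -> 0 <= ip Z S ->
  (1 + q * A) * ip Z Z <= potential A Z S eta G.
Proof.
move=> hA heta hZS; rewrite lerDl.
apply: mulr_ge0; first by rewrite divr_ge0 // ltW.
have hSS : 0 <= ip S S / (2 * L) by rewrite divr_ge0 ?ip_ge0 // mulr_ge0 // ltW.
have hqZS : 0 <= q * ip Z S by rewrite mulr_ge0 // ltW.
by rewrite mulrBl; lra.
Qed.

Lemma potential_decrease_identity (d A A' : R) (Z X Y Z' Yp G S G' S' : V) (eta eta' : R) :
  0 < d -> q * d ^+ 2 < 1 ->
  A' = d ^+ 2 / (1 - q * d ^+ 2) -> A = d * ((1 + q) * d - 2) / (1 - q * d ^+ 2) ->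
  X = (1 - q) *: Yp - L^-1 *: (G + S) ->
  Y = (1 - A / ((1 - q) * A')) *: Z + (A / ((1 - q) * A')) *: X ->
  Z' = (1 - q * d) *: Z - (d / L) *: (G' + S') ->
  potential A Z S eta G - potential A' Z' S' eta' G' =
    A * ((1 - q) * (eta - eta' - ip G' (Yp - Y)) - ip (G - G') (G - G') / (2 * L)) / L
  + (A' - A) * ((1 - q) * (ip G' Y - eta') - ip G' G' / (2 * L)) / L
  + (d * (A' - A) - A) * ip S' Z' / (d * L)
  + A * (ip S' Z' - ip S (Z' - Z)) / (d * L)
  + (A * ip (S - S') (S - S') + (A' - A) * ip S' S') / (2 * L ^+ 2).
Proof.
move=> hd hqd hA' hA hX hY hZ'.
have h1q : 0 < 1 - q by rewrite subr_gt0.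
have h1qd : 0 < 1 - q * d ^+ 2 by rewrite subr_gt0.
rewrite /potential hZ' hY hX hA' hA; ip_normalize.
by field; rewrite !gt_eqF.
Qed.

Lemma potential_decrease (d A A' : R) (Z X Y Z' Yp G S G' S' : V) (eta eta' : R) :
  0 < d -> q * d ^+ 2 < 1 ->
  A' = d ^+ 2 / (1 - q * d ^+ 2) -> A = d * ((1 + q) * d - 2) / (1 - q * d ^+ 2) ->
  0 <= A ->
  X = (1 - q) *: Yp - L^-1 *: (G + S) ->
  Y = (1 - A / ((1 - q) * A')) *: Z + (A / ((1 - q) * A')) *: X ->
  Z' = (1 - q * d) *: Z - (d / L) *: (G' + S') ->
  0 <= A * ((1 - q) * (eta - eta' - ip G' (Yp - Y)) - ip (G - G') (G - G') / (2 * L)) ->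
  ip G' G' / (2 * L) <= (1 - q) * (ip G' Y - eta') ->
  0 <= ip S' Z' -> 0 <= ip S' Z' - ip S (Z' - Z) ->
  potential A' Z' S' eta' G' <= potential A Z S eta G.
Proof.
move=> hd hqd hA' hA hA0 hX hY hZ' hgap1 hgap2 hmon hcyc.
have [hAA' hdA] := A_param_bounds q_gt0 q_lt1 hd hqd hA' hA.
rewrite -subr_ge0 (potential_decrease_identity _ _ hd hqd hA' hA hX hY hZ').
have hdL : 0 < d * L by rewrite mulr_gt0.
have hA'A : 0 <= A' - A by rewrite subr_ge0.
have hL2 : 0 < 2 * L ^+ 2 by rewrite mulr_gt0 // exprn_gt0.
rewrite -subr_ge0 in hgap2.
rewrite !addr_ge0 //.
- exact: divr_ge0 hgap1 (ltW L_gt0).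
- exact: divr_ge0 (mulr_ge0 hA'A hgap2) (ltW L_gt0).
- exact: divr_ge0 (mulr_ge0 hdA hmon) (ltW hdL).
- exact: divr_ge0 (mulr_ge0 hA0 hcyc) (ltW hdL).
- apply: divr_ge0 (ltW hL2).
  by rewrite addr_ge0 // mulr_ge0 // ip_ge0.
Qed.

End Potential.

Section ProxITEM.
Variables (f : V -> R) (gf : V -> V) (g : V -> \bar R) (mu L : R).
Variables (A : nat -> R) (x y z zbar : nat -> V) (xs : V).
Hypotheses (mu_gt0 : 0 < mu) (mu_lt_L : mu < L).
Hypotheses (f_sc : strongly_convex ip mu f) (f_smooth : L_smooth ip L f gf).
Hypotheses (g_proper : proper_fun g) (g_convex : econvex_fun g).
Let q := mu / L.
Hypotheses (A0 : A 0%N = 0) (z0 : z 0%N = x 0%N)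
  (A_rec : forall k, A k.+1 = A_next q (A k))
  (y_def : forall k, y k = (1 - beta_coef q (A k) (A k.+1)) *: z k
                           + beta_coef q (A k) (A k.+1) *: x k)
  (zbar_def : forall k, let dk := delta_coef q (A k.+1) in
     zbar k.+1 = (1 - q * dk) *: z k + (q * dk) *: y k - (dk / L) *: gf (y k))
  (z_prox : forall k, is_prox ip g (delta_coef q (A k.+1) / L) (zbar k.+1) (z k.+1))
  (x_def : forall k, x k.+1 = y k - L^-1 *: gf (y k)
                              - (delta_coef q (A k.+1))^-1 *: (zbar k.+1 - z k.+1))
  (xs_min : is_minimizer f g xs).

Let L_gt0 : 0 < L := lt_trans mu_gt0 mu_lt_L.
Let q_gt0 : 0 < q := divr_gt0 mu_gt0 L_gt0.
Let q_lt1 : q < 1. Proof. by rewrite ltr_pdivrMr // mul1r. Qed.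
Let mu_eq : mu = q * L. Proof. by rewrite divfK // gt_eqF. Qed.

Let h (v : V) := f v - mu / 2 * hnorm ip v ^+ 2.
Let gh (v : V) := gf v - mu *: v.
Let delta k := delta_coef q (A k.+1).
Let s k := (delta k / L)^-1 *: (zbar k.+1 - z k.+1).

Lemma A_ge0 k : 0 <= A k.
Proof.
elim: k => [|k IH]; first by rewrite A0.
by rewrite A_rec (le_trans IH) // ltW // A_next_gt.
Qed.

Lemma delta_param k :
  [/\ 0 < delta k, q * delta k ^+ 2 < 1, A k.+1 = delta k ^+ 2 / (1 - q * delta k ^+ 2)
    & A k = delta k * ((1 + q) * delta k - 2) / (1 - q * delta k ^+ 2)].
Proof. by rewrite /delta A_rec; exact: A_next_param (A_ge0 k). Qed.

Lemma h_first_order v d : h v + ip (gh v) d <= h (v + d).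
Proof. exact: convex_first_order f_sc (is_gradient_subr_sqr _ f_smooth.1) v d. Qed.

Lemma f_first_order v d : f v + ip (gf v) d <= f (v + d).
Proof.
have := h_first_order v d; rewrite /h /gh !hnorm_sqr; ip_normalize => ?.
have := mulr_ge0 (ltW mu_gt0) (ip_ge0 d); lra.
Qed.

Lemma h_descent v d : h (v + d) <= h v + ip (gh v) d + (L - mu) / 2 * ip d d.
Proof.
have := descent_lemma f_first_order f_smooth.2 v d.
by rewrite /h /gh !hnorm_sqr; ip_normalize => ?; lra.
Qed.

Lemma h_bregman_ge u v :
  ip (gh u - gh v) (gh u - gh v) / (2 * L) <= (1 - q) * bregman h gh u v.
Proof.
have h1q : 0 < 1 - q by rewrite subr_gt0.
have hLmu : 0 < L - mu by rewrite subr_gt0.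
have -> : forall a, a / (2 * L) = (1 - q) * (a / (2 * (L - mu))).
  by move=> a; rewrite mu_eq; field; rewrite !gt_eqF // -mu_eq.
have hb := bregman_ge hLmu h_first_order h_descent u v.
by have := ler_wpM2l (ltW h1q) hb.
Qed.

Lemma z_subgradient k : subgradient g (z k.+1) (s k).
Proof.
have [hd _ _ _] := delta_param k.
by have := prox_subgradient g_proper g_convex (divr_gt0 hd L_gt0) (z_prox k).
Qed.

Lemma xs_subgradient : subgradient g xs (- gf xs).
Proof.
exact: (minimizer_subgradient (gf := gf) g_proper g_convex xs_min
         (descent_lemma f_first_order f_smooth.2)).
Qed.

(* At [k = 0] these are chosen so that [x_decomp] also holds there. *)
Let S k := if k is k'.+1 then s k' + gf xs else 0.
Let Yp k := if k is k'.+1 then y k' - xs else (1 - q)^-1 *: (x 0%N - xs).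
Let G k := if k is k'.+1 then gh (y k') - gh xs else 0.
Let eta k := if k is k'.+1 then bregman h gh (y k') xs else 0.
Let P k := potential q L (A k) (z k - xs) (S k) (eta k) (G k).

Lemma x_decomp k : x k - xs = (1 - q) *: Yp k - L^-1 *: (G k + S k).
Proof.
case: k => [|k] /=.
  by rewrite addr0 scaler0 subr0 scalerA mulfV ?scale1r // gt_eqF // subr_gt0.
have [hd _ _ _] := delta_param k.
by rewrite x_def /s /delta /gh mu_eq; vec_eq; field; rewrite !gt_eqF.
Qed.

Lemma y_decomp k : y k - xs = (1 - A k / ((1 - q) * A k.+1)) *: (z k - xs)
                              + (A k / ((1 - q) * A k.+1)) *: (x k - xs).
Proof. by rewrite y_def /beta_coef; vec_eq; ring. Qed.

Lemma z_decomp k : z k.+1 - xs = (1 - q * delta k) *: (z k - xs)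
                                 - (delta k / L) *: (G k.+1 + S k.+1).
Proof.
have [hd _ _ _] := delta_param k.
have -> : z k.+1 = zbar k.+1 - (delta k / L) *: s k.
  by rewrite /s scalerA mulfV ?scale1r ?subKr // gt_eqF // divr_gt0.
by move: (zbar_def k) => /= ->; rewrite /delta /gh mu_eq; vec_eq; field; rewrite !gt_eqF.
Qed.

Lemma S_monotone k : 0 <= ip (S k.+1) (z k.+1 - xs).
Proof.
have := subgradient_monotone (z_subgradient k) xs_subgradient.
by rewrite opprK.
Qed.

Lemma iterate_potential0 : P 0%N = ip (x 0%N - xs) (x 0%N - xs).
Proof. by rewrite /P /potential A0 z0 !(mulr0, mul0r, addr0, mul1r). Qed.

Lemma iterate_potential_ge k : (1 + q * A k) * ip (z k - xs) (z k - xs) <= P k.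
Proof.
apply: potential_ge => //; first exact: A_ge0.
  by case: k => [|k] /=; [rewrite ip0l mul0r mulr0 | exact: h_bregman_ge].
by case: k => [|k]; [rewrite /= ip0r | rewrite ipC; exact: S_monotone].
Qed.

Lemma iterate_potential_decrease k : P k.+1 <= P k.
Proof.
have [hd hqd hA' hA] := delta_param k.
apply: (potential_decrease q_gt0 q_lt1 L_gt0 hd hqd hA' hA (A_ge0 k)
          (x_decomp k) (y_decomp k) (z_decomp k)).
- case: k {hd hqd hA' hA} => [|k] /=; first by rewrite A0 mul0r.
  apply: mulr_ge0; first exact: A_ge0.
  have subrBB (a b c : V) : a - c - (b - c) = a - b by rewrite opprB addrA subrK.
  rewrite subr_ge0 !subrBB -bregman_three_point.
  by have := h_bregman_ge (y k) (y k.+1).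
- have -> : ip (G k.+1) (y k - xs) - eta k.+1 = bregman h gh xs (y k).
    by rewrite /G /eta /bregman; ip_normalize; ring.
  have -> : ip (G k.+1) (G k.+1) = ip (gh xs - gh (y k)) (gh xs - gh (y k)).
    by rewrite /G; ip_normalize; ring.
  exact: h_bregman_ge.
- exact: S_monotone.
case: k {hd hqd hA' hA} => [|k] /=; first by rewrite ip0l subr0 S_monotone.
have := subgradient_cyclic3 xs_subgradient (z_subgradient k) (z_subgradient k.+1).
by ip_normalize => ?; lra.
Qed.

Lemma prox_item_dist_le k :
  hnorm ip (z k - xs) ^+ 2 <= (1 + q * A k)^-1 * hnorm ip (x 0%N - xs) ^+ 2.
Proof.
have hqA : 0 < 1 + q * A k := ltr_pwDl ltr01 (mulr_ge0 (ltW q_gt0) (A_ge0 k)).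
rewrite !hnorm_sqr ler_pdivlMl // -iterate_potential0.
apply: le_trans (iterate_potential_ge k) _.
by elim: k {hqA} => [|k IH] //; exact: le_trans (iterate_potential_decrease k) IH.
Qed.

End ProxITEM.

End Hilbert.

Theorem theorem1 (R : realType) (V : lmodType R) (ip : V -> V -> R)
  (f : V -> R) (gf : V -> V) (g : V -> \bar R) (mu L : R)
  (A : nat -> R) (x y z zbar : nat -> V) (xs : V) :
  is_hilbert ip ->
  0 < mu -> mu < L ->
  strongly_convex ip mu f ->
  L_smooth ip L f gf ->
  proper_fun g -> econvex_fun g -> lsc_fun ip g ->
  let q := mu / L in
  A 0%N = 0 ->
  z 0%N = x 0%N ->
  (forall k, A k.+1 = A_next q (A k)) ->
  (forall k, y k = (1 - beta_coef q (A k) (A k.+1)) *: z k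
                   + beta_coef q (A k) (A k.+1) *: x k) ->
  (forall k, let dk := delta_coef q (A k.+1) in
     zbar k.+1 = (1 - q * dk) *: z k + (q * dk) *: y k - (dk / L) *: gf (y k)) ->
  (forall k, is_prox ip g (delta_coef q (A k.+1) / L) (zbar k.+1) (z k.+1)) ->
  (forall k, x k.+1 = y k - L^-1 *: gf (y k)
                      - (delta_coef q (A k.+1))^-1 *: (zbar k.+1 - z k.+1)) ->
  is_minimizer f g xs ->
  forall k, hnorm ip (z k - xs) ^+ 2 <= (1 + q * A k)^-1 * hnorm ip (x 0%N - xs) ^+ 2.
Proof.
move=> Hh mu_gt0 mu_lt_L f_sc f_smooth g_proper g_convex _ q.
exact: prox_item_dist_le.
Qed.
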